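(* Let $\rho\in\mathbb R$, let $\mathbf a=(a_{m,n})$ be a complex matrix and let $\kappa_{\mathbf a}:\mathbb H_\rho\times\mathbb H_\rho\to\mathbb C$ be the Dirichlet series kernel with coefficient matrix $\mathbf a$. If $\kappa_{\mathbf a}$ is non-constant, then $\kappa_{\mathbf a}$ is not $\mathrm{Aut}_L(\mathbb H_\rho)$-invariant.
   Context: $\mathbb H_\rho=\{\Re s>\rho\}$. $\kappa_{\mathbf a}(s,u)=\sum_{m,n\ge1}a_{m,n}m^{-s}n^{-\bar u}$ is a Dirichlet series kernel on $\mathbb H_\rho$ if $(s,u)\mapsto\kappa_{\mathbf a}(s,\bar u)$ is regularly convergent on $\mathbb H_\rho\times\mathbb H_\rho$ (regular convergence of $\sum c_{m,n}m^{-s}n^{-u}$ at $(s_0,u_0)$: the double series converges there and all row series $\sum_m c_{m,n}m^{-s_0}$ and column series $\sum_n c_{m,n}n^{-u_0}$ converge). For $A=\begin{pmatrix}a&b\\0&d\end{pmatrix}\in\mathrm{SL}_2(\mathbb R)$ let $\phi_A(s)=\frac{a(s-\rho)-ib}{d}+\rho$; $\mathrm{Aut}_L(\mathbb H_\rho)$ is the group of all such $\phi_A$. For a group $G$ acting on a domain $\Omega$, a positive semi-definite kernel $\kappa$ on $\Omega$ is called $G$-invariant if $\kappa(g\cdot s,g\cdot u)=\kappa(s,u)$ for all $s,u\in\Omega$, $g\in G$. *)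

From Stdlib Require Import Reals ClassicalEpsilon.
From Coquelicot Require Import Coquelicot.
Open Scope R_scope.

Definition inH (rho : R) (s : C) : Prop := Re s > rho.

(* n^{-s} = exp(-s ln n) for a positive integer n *)
Definition npow_neg (n : nat) (s : C) : C :=
  Cmult (RtoC (exp (- (Re s) * ln (INR n))))
        (cos (Im s * ln (INR n)), - sin (Im s * ln (INR n))).

(* Double series sum_{m,n>=1} c m n, indices m,n >= 1 (c 0 _ and c _ 0 unused).
   Square/rectangular partial sums S(M,N) = sum_{m=1}^{M} sum_{n=1}^{N} c m n. *)
Definition dpartial (c : nat -> nat -> C) (MN : nat * nat) : C :=
  sum_n (fun i => sum_n (fun j => c (S i) (S j)) (snd MN)) (fst MN).

Definition dsum_to (c : nat -> nat -> C) (l : C) : Prop :=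
  filterlim (dpartial c) (filter_prod eventually eventually) (locally l).

Definition regularly_convergent (c : nat -> nat -> C) : Prop :=
  (exists l, dsum_to c l) /\
  (forall n : nat, (1 <= n)%nat -> ex_series (fun i => c (S i) n)) /\
  (forall m : nat, (1 <= m)%nat -> ex_series (fun j => c m (S j))).

Definition dterm (a : nat -> nat -> C) (s w : C) (m n : nat) : C :=
  Cmult (Cmult (a m n) (npow_neg m s)) (npow_neg n w).

Definition dvalue (c : nat -> nat -> C) : C :=
  epsilon (inhabits (RtoC 0)) (fun l => dsum_to c l).

Definition kappa (a : nat -> nat -> C) (s u : C) : C :=
  dvalue (dterm a s (Cconj u)).

(* kappa_a is a Dirichlet series kernel on H_rho: (s,u) |-> kappa_a(s, conj u)
   is regularly convergent on H_rho x H_rho. *)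
Definition is_dirichlet_kernel (rho : R) (a : nat -> nat -> C) : Prop :=
  forall s u : C, inH rho s -> inH rho u ->
    regularly_convergent (dterm a s (Cconj (Cconj u))).

(* phi_A(s) = (a (s - rho) - i b)/d + rho for A = [[a,b],[0,d]] in SL_2(R) *)
Definition phiA (rho a b d : R) (s : C) : C :=
  Cplus (Cdiv (Cminus (Cmult (RtoC a) (Cminus s (RtoC rho))) (Cmult Ci (RtoC b)))
              (RtoC d))
        (RtoC rho).

Definition autL_invariant (rho : R) (k : C -> C -> C) : Prop :=
  forall a b d : R, a * d = 1 ->
    forall s u : C, inH rho s -> inH rho u -> k (phiA rho a b d s) (phiA rho a b d u) = k s u.

Definition nonconstant_on (rho : R) (k : C -> C -> C) : Prop :=
  exists s u s' u', inH rho s /\ inH rho u /\ inH rho s' /\ inH rho u' /\ k s u <> k s' u'.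

From Stdlib Require Import Reals Lra Lia ClassicalEpsilon.
From Coquelicot Require Import Coquelicot.
Open Scope R_scope.

(* Regular convergence at [(rho+1, rho+1)] makes the terms [a_{m,n} m^-(rho+1) n^-(rho+1)]
   bounded (a term is a second difference of partial sums, except in finitely many rows and
   columns, whose series converge).  Hence, once [Re s] and [Re w] exceed [rho + 1] by a large
   [X], the series [sum a_{m,n} m^-s n^-w] differs from its corner term [a_{1,1}] by at most
   [B ((1 + 2^(2-X))^2 - 1)].  The dilations [phi_A], [A = diag(t, 1/t)], multiply [Re s - rho]
   by [t^2], so an invariant kernel equals its value at points arbitrarily far to the right,
   i.e. it is identically [a_{1,1}]. *)

Lemma bounded_upto (f : nat -> nat -> R) (K : nat) :
  (forall k, (k <= K)%nat -> exists B, forall n, f k n <= B) ->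
  exists B, forall k n, (k <= K)%nat -> f k n <= B.
Proof.
  induction K as [|K IH]; intros Hf.
  - destruct (Hf 0%nat (le_n 0)) as [B HB].
    exists B. intros k n Hk. replace k with 0%nat by lia. apply HB.
  - destruct IH as [B1 HB1]; [intros k Hk; apply Hf; lia|].
    destruct (Hf (S K) (le_n _)) as [B2 HB2].
    exists (Rmax B1 B2). intros k n Hk.
    destruct (Nat.eq_dec k (S K)) as [->|Hne].
    + eapply Rle_trans; [apply HB2|apply Rmax_r].
    + eapply Rle_trans; [apply HB1; lia|apply Rmax_l].
Qed.

Lemma ex_series_bounded {K : AbsRing} {V : NormedModule K} (a : nat -> V) :
  ex_series a -> exists B, forall n, norm (a n) <= B.
Proof.
  intros Ha. destruct (filterlim_bounded (sum_n a) Ha) as [B HB].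
  exists (B + B). intros [|n].
  - assert (H0 := HB 0%nat). rewrite sum_O in H0.
    assert (0 <= norm (a 0%nat)) by apply norm_ge_0. lra.
  - replace (a (S n)) with (minus (sum_n a (S n)) (sum_n a n)).
    2: { rewrite <- (sum_n_m_sum_n (G := NormedModule.AbelianGroup K V)) by lia.
         apply sum_n_n. }
    unfold minus.
    eapply Rle_trans; [apply norm_triangle|].
    rewrite norm_opp. apply Rplus_le_compat; apply HB.
Qed.

Lemma dpartial_eventually_bounded (c : nat -> nat -> C) (l : C) :
  dsum_to c l -> exists K M0 N0, forall M N, (M0 <= M)%nat -> (N0 <= N)%nat ->
    Cmod (dpartial c (M, N)) <= K.
Proof.
  intros Hl. unfold dsum_to in Hl.
  rewrite (filterlim_locally_ball_norm (K := C_AbsRing)) in Hl.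
  destruct (Hl (mkposreal 1 Rlt_0_1)) as [Q R' [M0 HQ] [N0 HR] HP].
  exists (Cmod l + 1), M0, N0. intros M N HM HN.
  assert (Hb : Cmod (dpartial c (M, N) - l) < 1) by exact (HP M N (HQ M HM) (HR N HN)).
  replace (dpartial c (M, N)) with ((dpartial c (M, N) - l) + l)%C by ring.
  eapply Rle_trans; [apply Cmod_triangle|]. lra.
Qed.

Lemma dpartial_second_difference (c : nat -> nat -> C) (i j : nat) :
  c (S (S i)) (S (S j)) =
  (dpartial c (S i, S j) - dpartial c (i, S j) - dpartial c (S i, j) + dpartial c (i, j))%C.
Proof.
  unfold dpartial; simpl. rewrite !sum_Sn. change plus with Cplus. ring.
Qed.

Lemma regularly_convergent_bounded (c : nat -> nat -> C) :
  regularly_convergent c ->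
  exists B, forall m n, (1 <= m)%nat -> (1 <= n)%nat -> Cmod (c m n) <= B.
Proof.
  intros [[l Hl] [Hcol Hrow]].
  destruct (dpartial_eventually_bounded c l Hl) as [K [M0 [N0 HK]]].
  destruct (bounded_upto (fun i j => Cmod (c (S i) (S j))) M0) as [Br HBr].
  { intros i _. exact (ex_series_bounded (V := C_NormedModule) _ (Hrow (S i) ltac:(lia))). }
  destruct (bounded_upto (fun j i => Cmod (c (S i) (S j))) N0) as [Bc HBc].
  { intros j _. exact (ex_series_bounded (V := C_NormedModule) _ (Hcol (S j) ltac:(lia))). }
  exists (Rmax (Rmax Br Bc) (4 * K)). intros [|p] [|q] Hp Hq; try lia.
  destruct (Nat.le_gt_cases p M0) as [HpM|HpM].
  { eapply Rle_trans; [apply HBr, HpM|]. eapply Rle_trans; [apply Rmax_l|apply Rmax_l]. }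
  destruct (Nat.le_gt_cases q N0) as [HqN|HqN].
  { eapply Rle_trans; [apply HBc, HqN|]. eapply Rle_trans; [apply Rmax_r|apply Rmax_l]. }
  eapply Rle_trans; [|apply Rmax_r].
  destruct p as [|i]; [lia|]. destruct q as [|j]; [lia|].
  rewrite dpartial_second_difference.
  assert (H1 := HK (S i) (S j) ltac:(lia) ltac:(lia)).
  assert (H2 := HK i (S j) ltac:(lia) ltac:(lia)).
  assert (H3 := HK (S i) j ltac:(lia) ltac:(lia)).
  assert (H4 := HK i j ltac:(lia) ltac:(lia)).
  unfold Cminus.
  eapply Rle_trans; [apply Cmod_triangle|].
  eapply Rle_trans; [apply Rplus_le_compat_r, Cmod_triangle|].
  eapply Rle_trans; [apply Rplus_le_compat_r, Rplus_le_compat_r, Cmod_triangle|].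
  rewrite !Cmod_opp. lra.
Qed.

Lemma Cmod_npow_neg (n : nat) (s : C) : Cmod (npow_neg n s) = exp (- Re s * ln (INR n)).
Proof.
  unfold npow_neg. rewrite Cmod_mult, Cmod_R, Rabs_pos_eq by (left; apply exp_pos).
  unfold Cmod; simpl.
  assert (H := sin2_cos2 (Im s * ln (INR n))). unfold Rsqr in H.
  replace (_ * (_ * 1) + _ * (_ * 1)) with 1 by nra.
  rewrite sqrt_1. ring.
Qed.

Lemma npow_neg_1 (s : C) : npow_neg 1 s = 1%C.
Proof.
  unfold npow_neg. simpl INR. rewrite ln_1, !Rmult_0_r, exp_0, cos_0, sin_0.
  apply injective_projections; simpl; ring.
Qed.

Lemma dterm_1_1 (a : nat -> nat -> C) (s w : C) : dterm a s w 1 1 = a 1%nat 1%nat.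
Proof. unfold dterm. rewrite !npow_neg_1. ring. Qed.

Lemma Cmod_dterm_shift (a : nat -> nat -> C) (s w s0 w0 : C) (m n : nat) :
  Cmod (dterm a s w m n) = Cmod (dterm a s0 w0 m n) *
    exp (- (Re s - Re s0) * ln (INR m)) * exp (- (Re w - Re w0) * ln (INR n)).
Proof.
  unfold dterm. rewrite !Cmod_mult, !Cmod_npow_neg.
  replace (- Re s * ln (INR m)) with (- Re s0 * ln (INR m) + - (Re s - Re s0) * ln (INR m)) by ring.
  replace (- Re w * ln (INR n)) with (- Re w0 * ln (INR n) + - (Re w - Re w0) * ln (INR n)) by ring.
  rewrite !exp_plus. ring.
Qed.

Lemma exp_le_compat (x y : R) : x <= y -> exp x <= exp y.
Proof.
  intros [H|H]; [left; apply exp_increasing, H|right; rewrite H; reflexivity].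
Qed.

(* For [k >= 2], [k^-Y <= 2^(2-X) k^-2] and [k^-2 <= 1/(k-1) - 1/k], which telescopes. *)
Lemma sum_exp_neg_ln_le (X Y delta : R) (M : nat) :
  2 <= X -> X <= Y -> exp (- (X - 2) * ln 2) <= delta ->
  sum_n (fun i => exp (- Y * ln (INR (S i)))) M <= 1 + delta.
Proof.
  intros HX HXY Hdelta.
  assert (Hd : 0 < delta) by (eapply Rlt_le_trans; [apply exp_pos|exact Hdelta]).
  assert (Hl2 : 0 < ln 2) by (rewrite <- ln_1; apply ln_increasing; lra).
  enough (H : sum_n (fun i => exp (- Y * ln (INR (S i)))) M <= 1 + delta * (1 - / INR (S M))).
  { assert (0 < / INR (S M)) by (apply Rinv_0_lt_compat, lt_0_INR; lia). nra. }
  induction M as [|M IH].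
  - rewrite sum_O. simpl INR. rewrite ln_1, Rmult_0_r, exp_0, Rinv_1. lra.
  - rewrite sum_Sn. change plus with Rplus.
    set (k := INR (S (S M))).
    assert (Hk : k = INR (S M) + 1) by (unfold k; rewrite S_INR; ring).
    assert (HM : 1 <= INR (S M)) by (rewrite S_INR; assert (H := pos_INR M); lra).
    assert (Hlk : ln 2 <= ln k) by (apply ln_le; lra).
    assert (Hterm : exp (- Y * ln k) <= delta / (k * k)).
    { replace (- Y * ln k) with (- (Y - 2) * ln k + - (2 * ln k)) by ring.
      rewrite exp_plus, exp_Ropp.
      replace (2 * ln k) with (ln k + ln k) by ring.
      rewrite exp_plus, exp_ln by lra.
      unfold Rdiv. apply Rmult_le_compat_r; [left; apply Rinv_0_lt_compat; nra|].
      eapply Rle_trans; [apply exp_le_compat|exact Hdelta]. nra. }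
    assert (Htelescope : / (k * k) <= / INR (S M) - / k).
    { rewrite Hk. field_simplify; try lra.
      unfold Rdiv. apply Rmult_le_compat_l; [lra|].
      apply Rinv_le_contravar; nra. }
    fold k. fold k in IH. unfold Rdiv in Hterm. nra.
Qed.

Lemma sum_n_nonneg (f : nat -> R) (N : nat) : (forall i, 0 <= f i) -> 0 <= sum_n f N.
Proof. intros Hf. rewrite <- (Rmult_0_r (INR (S N))), <- sum_n_const. apply sum_n_m_le, Hf. Qed.

Lemma Cmod_sum_n_le (f : nat -> C) (g : nat -> R) (N : nat) :
  (forall j, Cmod (f j) <= g j) -> Cmod (sum_n f N) <= sum_n g N.
Proof.
  intros Hfg.
  exact (Rle_trans _ _ _ (norm_sum_n_m (V := C_NormedModule) f 0 N) (sum_n_m_le _ _ 0 N Hfg)).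
Qed.

Lemma Cmod_sum_n_sub_first_le (f : nat -> C) (g : nat -> R) (N : nat) :
  (forall j, Cmod (f j) <= g j) ->
  Cmod (sum_n f N - f 0%nat) <= sum_n g N - g 0%nat.
Proof.
  intros Hfg. induction N as [|N IH].
  - rewrite !sum_O. replace (f 0%nat - f 0%nat)%C with (RtoC 0) by ring.
    rewrite Cmod_0. lra.
  - rewrite !sum_Sn. change plus with Cplus at 1. change plus with Rplus.
    replace (sum_n f N + f (S N) - f 0%nat)%C with ((sum_n f N - f 0%nat) + f (S N))%C by ring.
    eapply Rle_trans; [apply Cmod_triangle|]. specialize (Hfg (S N)). lra.
Qed.

Lemma Cmod_dsum_sub_corner_le (c : nat -> nat -> C) (g : nat -> nat -> R) (M N : nat) :
  (forall i j, Cmod (c i j) <= g i j) ->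
  Cmod (sum_n (fun i => sum_n (c i) N) M - c 0%nat 0%nat) <=
  sum_n (fun i => sum_n (g i) N) M - g 0%nat 0%nat.
Proof.
  intros Hcg. induction M as [|M IH].
  - rewrite !sum_O. apply Cmod_sum_n_sub_first_le, Hcg.
  - rewrite !sum_Sn. change plus with Cplus at 1. change plus with Rplus.
    match goal with |- Cmod (?S + ?T - ?c) <= _ =>
      replace (S + T - c)%C with ((S - c) + T)%C by ring end.
    eapply Rle_trans; [apply Cmod_triangle|].
    assert (H := Cmod_sum_n_le (c (S M)) (g (S M)) N (Hcg (S M))). lra.
Qed.

Lemma Cmod_sub_le_of_filterlim {T : Type} (F : (T -> Prop) -> Prop) (f : T -> C)
  (l x0 : C) (r : R) :
  ProperFilter F -> filterlim f F (locally l) ->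
  (forall t, Cmod (f t - x0) <= r) -> Cmod (l - x0) <= r.
Proof.
  intros HF Hl Hr. apply le_epsilon. intros eps Heps.
  rewrite (filterlim_locally_ball_norm (K := C_AbsRing)) in Hl.
  destruct (filter_ex _ (Hl (mkposreal eps Heps))) as [t Ht].
  change (Cmod (f t - l) < eps) in Ht.
  replace (l - x0)%C with (- (f t - l) + (f t - x0))%C by ring.
  eapply Rle_trans; [apply Cmod_triangle|]. rewrite Cmod_opp. specialize (Hr t). lra.
Qed.

Lemma Cmod_dvalue_sub_le (c : nat -> nat -> C) (x0 : C) (r : R) :
  (exists l, dsum_to c l) ->
  (forall M N, Cmod (dpartial c (M, N) - x0) <= r) -> Cmod (dvalue c - x0) <= r.
Proof.
  intros Hc Hr. apply (Cmod_sub_le_of_filterlim (filter_prod eventually eventually) (dpartial c)).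
  - apply filter_prod_proper; apply eventually_filter.
  - unfold dvalue. apply epsilon_spec, Hc.
  - intros [M N]. apply Hr.
Qed.

Lemma Cmod_dvalue_dterm_sub_le (a : nat -> nat -> C) (s0 w0 s w : C) (B X delta : R) :
  (forall m n, (1 <= m)%nat -> (1 <= n)%nat -> Cmod (dterm a s0 w0 m n) <= B) ->
  2 <= X -> exp (- (X - 2) * ln 2) <= delta ->
  Re s0 + X <= Re s -> Re w0 + X <= Re w ->
  (exists l, dsum_to (dterm a s w) l) ->
  Cmod (dvalue (dterm a s w) - a 1%nat 1%nat) <= B * ((1 + delta) * (1 + delta) - 1).
Proof.
  intros HB HX Hdelta Hs Hw Hc.
  assert (HB0 : 0 <= B) by (eapply Rle_trans; [apply Cmod_ge_0|apply (HB 1%nat 1%nat); lia]).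
  set (eX := fun i : nat => exp (- (Re s - Re s0) * ln (INR (S i)))).
  set (eY := fun j : nat => exp (- (Re w - Re w0) * ln (INR (S j)))).
  apply Cmod_dvalue_sub_le; [exact Hc|]. intros M N.
  unfold dpartial; simpl fst; simpl snd. rewrite <- (dterm_1_1 a s w).
  eapply Rle_trans.
  { apply (Cmod_dsum_sub_corner_le (fun i j => dterm a s w (S i) (S j))
             (fun i j => B * eX i * eY j)).
    intros i j. rewrite (Cmod_dterm_shift a s w s0 w0).
    apply Rmult_le_compat_r; [left; apply exp_pos|].
    apply Rmult_le_compat_r; [left; apply exp_pos|].
    apply HB; lia. }
  replace (sum_n (fun i => sum_n (fun j => B * eX i * eY j) N) M) with
    (B * sum_n eX M * sum_n eY N).
  2: { transitivity (sum_n (fun i => B * eX i) M * sum_n eY N).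
       - f_equal. symmetry. exact (sum_n_mult_l (K := R_Ring) B eX M).
       - symmetry. rewrite <- (sum_n_ext (fun i => B * eX i * sum_n eY N)).
         + exact (sum_n_mult_r (K := R_Ring) (sum_n eY N) (fun i => B * eX i) M).
         + intros i. symmetry. exact (sum_n_mult_l (K := R_Ring) (B * eX i) eY N). }
  replace (B * eX 0%nat * eY 0%nat) with B
    by (unfold eX, eY; simpl INR; rewrite ln_1, !Rmult_0_r, exp_0; ring).
  assert (HsX := sum_exp_neg_ln_le X (Re s - Re s0) delta M HX ltac:(lra) Hdelta).
  assert (HsY := sum_exp_neg_ln_le X (Re w - Re w0) delta N HX ltac:(lra) Hdelta).
  assert (HX0 : 0 <= sum_n eX M) by (apply sum_n_nonneg; intros; left; apply exp_pos).
  assert (HY0 : 0 <= sum_n eY N) by (apply sum_n_nonneg; intros; left; apply exp_pos).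
  fold eX in HsX. fold eY in HsY.
  assert (sum_n eX M * sum_n eY N <= (1 + delta) * (1 + delta))
    by (apply Rmult_le_compat; lra).
  nra.
Qed.

Lemma Re_phiA_dilation (rho t : R) (s : C) : t <> 0 ->
  Re (phiA rho t 0 (/ t) s) = t * t * (Re s - rho) + rho.
Proof. intros Ht. unfold phiA, Re; simpl. field. exact Ht. Qed.

Lemma dilation_pushes_right (rho X : R) (x y : C) : inH rho x -> inH rho y ->
  exists t, 1 <= t /\ X <= Re (phiA rho t 0 (/ t) x) /\ X <= Re (phiA rho t 0 (/ t) y).
Proof.
  unfold inH. intros Hx Hy.
  set (D := Rabs (X - rho)).
  assert (HD : X - rho <= D) by apply Rle_abs.
  assert (HDx : 0 <= D / (Re x - rho)) by (apply Rdiv_le_0_compat; [apply Rabs_pos|lra]).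
  assert (HDy : 0 <= D / (Re y - rho)) by (apply Rdiv_le_0_compat; [apply Rabs_pos|lra]).
  set (t := 1 + D / (Re x - rho) + D / (Re y - rho)).
  assert (Ht : 1 <= t) by (unfold t; lra).
  assert (Hfar : forall v, rho < Re v -> D / (Re v - rho) <= t -> X <= t * t * (Re v - rho) + rho).
  { intros v Hv Htv.
    assert (D / (Re v - rho) * (Re v - rho) = D) by (field; lra).
    assert (0 <= t * (t - 1) * (Re v - rho))
      by (apply Rmult_le_pos; [apply Rmult_le_pos|]; lra).
    assert (D / (Re v - rho) * (Re v - rho) <= t * (Re v - rho)) by nra.
    lra. }
  exists t. rewrite !Re_phiA_dilation by lra.
  split; [exact Ht|split; apply Hfar; unfold t; lra].
Qed.

Lemma exists_exp_neg_ln2_le (delta : R) : 0 < delta ->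
  exists X, 2 <= X /\ exp (- (X - 2) * ln 2) <= delta.
Proof.
  intros Hdelta.
  assert (Hl2 : 0 < ln 2) by (rewrite <- ln_1; apply ln_increasing; lra).
  exists (2 + Rabs (ln delta) / ln 2). split.
  - assert (0 <= Rabs (ln delta) / ln 2) by (apply Rdiv_le_0_compat; [apply Rabs_pos|lra]). lra.
  - rewrite <- (exp_ln delta) at 2 by exact Hdelta. apply exp_le_compat.
    replace (- (2 + Rabs (ln delta) / ln 2 - 2) * ln 2) with (- Rabs (ln delta)) by (field; lra).
    assert (H := Rabs_maj2 (ln delta)). lra.
Qed.

Lemma le_0_of_le_mul_sqr_sub_1 (r K : R) : 0 <= K ->
  (forall delta, 0 < delta -> r <= K * ((1 + delta) * (1 + delta) - 1)) -> r <= 0.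
Proof.
  intros HK Hr. apply Rnot_lt_le. intros Hpos.
  assert (Hq : 0 < r / (3 * K + 1)) by (apply Rdiv_lt_0_compat; lra).
  set (delta := Rmin 1 (r / (3 * K + 1))).
  assert (Hd0 : 0 < delta) by (apply Rmin_glb_lt; lra).
  assert (Hd1 : delta <= 1) by apply Rmin_l.
  assert (Hdr : (3 * K + 1) * delta <= r).
  { assert (delta <= r / (3 * K + 1)) by apply Rmin_r.
    assert ((3 * K + 1) * (r / (3 * K + 1)) = r) by (field; lra). nra. }
  specialize (Hr delta Hd0). nra.
Qed.

Lemma kappa_const_of_autL_invariant (rho : R) (a : nat -> nat -> C) :
  is_dirichlet_kernel rho a -> autL_invariant rho (kappa a) ->
  forall x y, inH rho x -> inH rho y -> kappa a x y = a 1%nat 1%nat.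
Proof.
  intros Hk Hinv x y Hx Hy.
  set (s0 := RtoC (rho + 1)).
  assert (Hs0 : inH rho s0) by (unfold inH, s0; simpl; lra).
  destruct (regularly_convergent_bounded (dterm a s0 s0)) as [B HB].
  { rewrite <- (Cconj_conj s0) at 2. apply Hk; exact Hs0. }
  assert (HB0 : 0 <= B) by (eapply Rle_trans; [apply Cmod_ge_0|apply (HB 1%nat 1%nat); lia]).
  assert (Hclose : Cmod (kappa a x y - a 1%nat 1%nat) <= 0).
  { apply (le_0_of_le_mul_sqr_sub_1 _ B HB0). intros delta Hdelta.
    destruct (exists_exp_neg_ln2_le delta Hdelta) as [X [HX Hd]].
    destruct (dilation_pushes_right rho (rho + 1 + X) x y Hx Hy) as [t [Ht [Htx Hty]]].
    rewrite <- (Hinv t 0 (/ t) ltac:(field; lra) x y Hx Hy). unfold kappa.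
    set (x' := phiA rho t 0 (/ t) x) in *. set (y' := phiA rho t 0 (/ t) y) in *.
    apply (Cmod_dvalue_dterm_sub_le a s0 s0 x' (Cconj y') B X delta HB HX Hd).
    - change (Re s0) with (rho + 1). lra.
    - change (Re s0) with (rho + 1). rewrite re_conj. lra.
    - assert (Hreg := Hk x' (Cconj y')). rewrite Cconj_conj in Hreg.
      apply Hreg; unfold inH; rewrite ?re_conj; lra. }
  assert (E : (kappa a x y - a 1%nat 1%nat)%C = RtoC 0)
    by (apply Cmod_eq_0, Rle_antisym; [exact Hclose|apply Cmod_ge_0]).
  replace (kappa a x y) with ((kappa a x y - a 1%nat 1%nat) + a 1%nat 1%nat)%C by ring.
  rewrite E. ring.
Qed.

Theorem corollary4p6 (rho : R) (a : nat -> nat -> C) :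
  is_dirichlet_kernel rho a ->
  nonconstant_on rho (kappa a) ->
  ~ autL_invariant rho (kappa a).
Proof.
  intros Hk [s [u [s' [u' [Hs [Hu [Hs' [Hu' Hne]]]]]]]] Hinv.
  apply Hne. rewrite !(kappa_const_of_autL_invariant rho a Hk Hinv) by assumption. reflexivity.
Qed.
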